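(* Let $x,y\in X$ with $\deg(x)=\deg(y)=i$ for some positive integer $i$, and assume there are integers $n>i+2$ and $k\geq1$ such that $T^j(x)_n=T^j(y)_n$ for all $j\geq k$ and the infinite path $\big(T^j(x)_n\big)_{j\geq k}$ in $G_n$ begins with the cycle $c_{n,i}$ (that is, $\big(T^{k+t}(x)_n\big)_{t=0}^{|c_{n,i}|}$ is exactly the cycle $c_{n,i}$). Then $T^j(x)_n=T^j(y)_n$ for all $j\geq0$.
   Context: Paths and cycles: a graph is $G=(V,E)$ with $V$ finite and $E\subset V\times V$. A path is a finite sequence of vertices $(u_0,\dots,u_L)$ with $(u_j,u_{j+1})\in E$; its length is $|\cdot|=L$; a cycle is a path with $u_0=u_L$. For paths where one ends where the next starts, $+$ denotes concatenation and $a\,c$ means the cycle $c$ traversed $a$ times. Construction: $G_0=(V_0,E_0)$ with $V_0=\{v_{0,0}\}$, $E_0=\{e_{0,0}\}$, $e_{0,0}=(v_{0,0},v_{0,0})$. For $n\geq1$, $G_n=(V_n,E_n)$ consists of a vertex $v_{n,0}$, the loop $e_{n,0}=(v_{n,0},v_{n,0})$, and $n$ cycles $c_{n,1},\dots,c_{n,n}$, each starting and ending at $v_{n,0}$, whose vertices other than $v_{n,0}$ are pairwise distinct (within each cycle and across cycles); $V_n$ is the set of all these vertices and $E_n$ consists of $e_{n,0}$ and the edges of the cycles. The maps $\varphi_n\colon V_{n+1}\to V_n$ and the lengths of the cycles $c_{n+1,i}$ are defined together: $\varphi_n(v_{n+1,0})=v_{n,0}$, and for each $i$ a path $P_{n,i}$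 in $G_n$ from $v_{n,0}$ to $v_{n,0}$ is given; $c_{n+1,i}$ has length $|P_{n,i}|$ and $\varphi_n$ maps its $j$-th vertex to the $j$-th vertex of $P_{n,i}$ (written $\varphi_n(c_{n+1,i})=P_{n,i}$). The paths are: $P_{0,1}=10\,e_{0,0}$; for $n\geq1$: $P_{n,i}=e_{n,0}+2c_{n,i}+2c_{n,i+1}+\dots+2c_{n,n}+e_{n,0}$ for $2\leq i\leq n$; $P_{n,n+1}=(n+2)^2\big(\sum_{i=1}^n|c_{n,i}|\big)\,e_{n,0}$; and $P_{n,1}=(1\,e_{n,0}+2c_{n,1})+(2\,e_{n,0}+2c_{n,1})+\dots+(k_n\,e_{n,0}+2c_{n,1})+e_{n,0}+2c_{n,2}+\dots+2c_{n,n}+e_{n,0}$, where $k_n=2\big(1+\sum_{i=1}^n|c_{n,i}|\big)$. Let $X=\{x\in\prod_{n\geq0}V_n:\varphi_n(x_{n+1})=x_n\ \forall n\}$ with metric $d(x,y)=2^{-\min\{i:x_i\neq y_i\}}$ ($d(x,x)=0$); $X$ is a compact zero-dimensional metric space, and $T\colon X\to X$ defined by $T(x)=y$ iff $(x_n,y_n)\in E_n$ for all $n$ is a well-defined homeomorphism. Write $x_n$ for the $n$-th coordinate of $x$; for $z\in X$ the sequence $(T^j(z)_n)_{j\geq0}$ is an infinite path in $G_n$. Degree: for $v\in V_n$, $\deg(v)=+\infty$ if $v=v_{n,0}$ and $\deg(v)=i$ if $v$ is a vertex of $c_{n,i}$ different from $v_{n,0}$; for $x\in X$, $\deg(x)=\min_n\deg(x_n)$.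 *)

From mathcomp Require Import all_boot.
Set Implicit Arguments. Unset Strict Implicit. Unset Printing Implicit Defensive.

(* Vertices of every G_n are encoded as pairs of naturals:
   (0,0)  is the distinguished vertex v_{n,0};
   (i,j)  with 1 <= i <= n and 1 <= j < |c_{n,i}| is the j-th vertex of c_{n,i}. *)
Definition V := (nat * nat)%type.
Definition v0 : V := (0, 0).

(* A path starting at v_{n,0} is represented by its list of vertices AFTER the
   starting vertex; hence its length is the size of the list and concatenation
   of paths is list concatenation. *)
Definition eloop : seq V := [:: v0].
Definition cyc (L i : nat) : seq V :=                          (* c_{n,i}, |c_{n,i}| = L *)
  [seq (i, j) | j <- iota 1 L.-1] ++ [:: v0].
Definition rep (a : nat) (p : seq V) : seq V := flatten (nseq a p).

(* The path P_{n,i} (tail form) given the lengths L m = |c_{n,m}| of level n. *)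
Definition Ptail (n : nat) (L : nat -> nat) (i : nat) : seq V :=
  if n is 0 then (if i == 1 then rep 10 eloop else [::]) else
  let S := \sum_(1 <= m < n.+1) L m in
  if i == 1 then
    flatten [seq rep a eloop ++ rep 2 (cyc (L 1) 1) | a <- iota 1 (2 * (1 + S))]
    ++ eloop ++ flatten [seq rep 2 (cyc (L m) m) | m <- iota 2 n.-1] ++ eloop
  else if (2 <= i <= n) then
    eloop ++ flatten [seq rep 2 (cyc (L m) m) | m <- iota i (n - i + 1)] ++ eloop
  else if i == n.+1 then rep ((n + 2) ^ 2 * S) eloop
  else [::].

(* lens n i = |c_{n,i}| *)
Fixpoint lens (n : nat) : nat -> nat :=
  match n with
  | 0 => fun _ => 0
  | n'.+1 => fun i => size (Ptail n' (lens n') i)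
  end.

Definition cycv (n i : nat) : seq V := v0 :: cyc (lens n i) i.

Definition inV (n : nat) (v : V) : Prop :=
  v = v0 \/ ((1 <= v.1 <= n) /\ (1 <= v.2 < lens n v.1)).

Definition edge (n : nat) (u w : V) : Prop :=
  (u = v0 /\ w = v0) \/
  exists i t, 1 <= i <= n /\ t < lens n i /\
              u = nth v0 (cycv n i) t /\ w = nth v0 (cycv n i) t.+1.

(* phi_n : V_{n+1} -> V_n : the j-th vertex of c_{n+1,i} goes to the j-th
   vertex of P_{n,i}. *)
Definition phi (n : nat) (v : V) : V :=
  if v == v0 then v0 else nth v0 (v0 :: Ptail n (lens n) v.1) v.2.

Definition inX (x : nat -> V) : Prop :=
  forall n, inV n (x n) /\ phi n (x n.+1) = x n.

(* xs is the T-orbit of xs 0: xs j = T^j(xs 0), where T(x) = y iff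
   (x_n, y_n) in E_n for all n. *)
Definition is_orbit (xs : nat -> nat -> V) : Prop :=
  (forall j, inX (xs j)) /\ (forall j n, edge n (xs j n) (xs j.+1 n)).

(* Degree: deg(v) = +oo (None) for v_{n,0}, i (Some i) for a vertex of c_{n,i}. *)
Definition vdeg (v : V) : option nat := if v.1 == 0 then None else Some v.1.

Definition deg_is (x : nat -> V) (i : nat) : Prop :=
  (exists n, vdeg (x n) = Some i) /\ (forall n m, vdeg (x n) = Some m -> i <= m).

From mathcomp Require Import all_boot zify.

(* Let N >= n be a level. Since both points have degree i, neither orbit ever visits a cycle
   c_{N,m} with m < i. Suppose both orbits enter c_{N,i} at time s+1. One level up they sit at
   vertices (i,p) and (i,p') of c_{N+1,i}, so at level N both follow the path P_{N,i}, from
   positions p and p'. A move out of v_{N,0} into a cycle c_{N,m} with m <= n shows up at level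
   n a fixed number of steps later, so agreement at level n keeps the two orbits in lockstep
   along P_{N,i}. If p <> p', the orbit that is ahead enters c_{N,i+1} while the other one is
   still on a cycle of index at most i, a contradiction. Hence p = p': the orbits coincide at
   level N+1, hence at level n, for the p previous steps, and enter c_{N+1,i} together at time
   s+1-p. Since p >= 2, iterating reaches time 0. *)

Lemma nth_cyc L m j : nth v0 (cyc L m) j = if j < L.-1 then (m, j.+1) else v0.
Proof.
rewrite /cyc nth_cat size_map size_iota; case: ifP => hj.
  by rewrite (nth_map 0) ?size_iota // nth_iota.
by case: (j - L.-1) => [|?]; rewrite /= ?nth_nil.
Qed.

Lemma size_cyc L m : size (cyc L m) = L.-1.+1.
Proof. by rewrite size_cat size_map size_iota addn1. Qed.

Lemma size_rep a l : size (rep a l) = a * size l.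
Proof. by elim: a => [|a IH] //=; rewrite size_cat IH mulSn. Qed.

Lemma nth_cycv N m t :
  nth v0 (cycv N m) t = if 0 < t < lens N m then (m, t) else v0.
Proof. by case: t => [|t] //=; rewrite nth_cyc; case: (lens N m). Qed.

Lemma pair_neq_v0l m r : 0 < m -> (m, r) != v0.
Proof. by case: m. Qed.

Lemma pair_neq_v0r m r : 0 < r -> (m, r) != v0.
Proof. by case: r; case: m. Qed.

Definition depth_le (k : nat) (l : seq V) := forall j, (nth v0 l j).2 <= j + k.

Lemma depth_le_nil k : depth_le k [::].
Proof. by move=> j; rewrite nth_nil. Qed.

Lemma depth_le_cat k l1 l2 : depth_le k l1 -> depth_le k l2 -> depth_le k (l1 ++ l2).
Proof.
move=> h1 h2 j; rewrite nth_cat; case: ifP => _; first exact: h1.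
have := h2 (j - size l1); lia.
Qed.

Lemma depth_le_flatten k (T : Type) (f : T -> seq V) s :
  (forall x, depth_le k (f x)) -> depth_le k (flatten (map f s)).
Proof. by move=> h; elim: s => [|x s IH] /=; [apply: depth_le_nil | apply: depth_le_cat]. Qed.

Lemma depth_le_rep k a l : depth_le k l -> depth_le k (rep a l).
Proof. by move=> h; elim: a => [|a IH] /=; [apply: depth_le_nil | apply: depth_le_cat]. Qed.

Lemma depth_le_eloop k : depth_le k eloop.
Proof. by case=> [|j] /=; rewrite ?nth_nil. Qed.

Lemma depth_le_cyc L m : depth_le 1 (cyc L m).
Proof. by move=> j; rewrite nth_cyc; case: ifP => //= _; rewrite addn1. Qed.

Lemma depth_le_cons l : depth_le 1 l -> depth_le 0 (v0 :: l).
Proof. by move=> h [|j] //=; rewrite addn0 -addn1. Qed.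

Lemma Ptail_depth N L m j : (nth v0 (Ptail N L m) j).2 <= j.
Proof.
rewrite -[j in _ <= j]addn0; move: j.
have rep_eloop a : depth_le 0 (rep a eloop) by apply/depth_le_rep/depth_le_eloop.
rewrite /Ptail; case: N => [|N]; repeat case: ifP => _.
all: try exact: rep_eloop; try exact: depth_le_nil.
all: apply: depth_le_cons; repeat first
  [ apply: depth_le_cyc | apply: depth_le_eloop | apply: depth_le_rep
  | apply: depth_le_flatten => ? | apply: depth_le_cat | apply: depth_le_nil ].
Qed.

Lemma all_flatten_map (T : eqType) (p : pred V) (f : T -> seq V) s :
  (forall x, x \in s -> all p (f x)) -> all p (flatten (map f s)).
Proof.
elim: s => [|x s IH] h //=; rewrite all_cat h ?mem_head // IH // => y hy.
by rewrite h // in_cons hy orbT.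
Qed.

Lemma all_rep (p : pred V) a l : all p l -> all p (rep a l).
Proof. by move=> h; elim: a => [|a IH] //=; rewrite all_cat h. Qed.

Lemma all_cyc (p : pred V) L m : p v0 -> (forall j, p (m, j)) -> all p (cyc L m).
Proof. by move=> h0 h; rewrite all_cat all_map all_seq1 h0 andbT; apply/allP => j _; apply: h. Qed.

Ltac split_all := repeat first
  [ apply: all_cyc | apply: all_rep | apply: all_flatten_map => ? ?
  | rewrite all_cat; apply/andP; split | apply/andP; split | done ].

Ltac bound_iota := try (match goal with H : is_true (_ \in iota _ _) |- _ =>
  rewrite mem_iota in H end); try move=> ?; rewrite /=; lia.

Lemma Ptail_cycle_ge N L m : all (fun e => (e == v0) || (m <= e.1)) (Ptail N L m).
Proof.
case: N => [|N]; rewrite /Ptail; first by case: ifP => _ //; split_all.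
case: ifP => [/eqP -> | _]; first by split_all; bound_iota.
by case: ifP => _; [split_all; bound_iota | case: ifP => _ //; split_all].
Qed.

Lemma Ptail_cycle_head N L m : 1 <= m <= N ->
  exists rest, Ptail N L m = v0 :: cyc (L m) m ++ rest.
Proof.
case: N => [|N] hm; first by lia.
rewrite /Ptail; case: ifP => [/eqP ->|/eqP hm1].
  have [c ->] : exists c, 2 * (1 + \sum_(1 <= m0 < N.+2) L m0) = c.+1.
    by eexists; rewrite mulnDr muln1 addSn.
  by rewrite /= /rep /=; eexists; rewrite -!catA.
rewrite ifT; last by lia.
have -> : N.+1 - m + 1 = (N.+1 - m).+1 by lia.
by rewrite /= /rep /=; eexists; rewrite -!catA.
Qed.

Lemma Ptail_next_cycle N L i : 1 <= i < N ->
  exists A C, [/\ Ptail N L i = A ++ cyc (L i.+1) i.+1 ++ C,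
    all (fun e => e.1 <= i) A & all (fun e => e.1 != i) C].
Proof.
case: N => [|N] hi; first by lia.
rewrite /Ptail; case: ifP => [/eqP ei|/eqP ni].
  subst i; case: N hi => [|N] hi //.
  set F := flatten [seq rep a eloop ++ _ | a <- _].
  exists (F ++ eloop), (cyc (L 2) 2 ++ flatten [seq rep 2 (cyc (L m) m) | m <- iota 3 N] ++ eloop).
  split.
  - by rewrite -catA; congr (F ++ _); rewrite /= /rep /= cats0 -!catA.
  - by split_all; bound_iota.
  - by split_all; bound_iota.
rewrite ifT; last by lia.
have -> : N.+1 - i + 1 = (N.+1 - i.+1).+2 by lia.
pose F := flatten [seq rep 2 (cyc (L m) m) | m <- iota i.+2 (N.+1 - i.+1)].
exists (eloop ++ cyc (L i) i ++ cyc (L i) i), ((cyc (L i.+1) i.+1 ++ F) ++ eloop); split.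
- by rewrite /= /rep /= !cats0 -!catA.
- by split_all; bound_iota.
- by split_all; bound_iota.
Qed.

Lemma Ptail_next_cycle_index N L i : 1 <= i < N -> 2 <= L i.+1 ->
  let P := v0 :: Ptail N L i in
  exists q, [/\ q < size (Ptail N L i), nth v0 P q = (i.+1, 1),
    forall j, j < q -> (nth v0 P j).1 <= i &
    forall j, q <= j -> (nth v0 P j).1 != i].
Proof.
move=> hi hL /=; have [A [C [-> hA hC]]] := Ptail_next_cycle N L i hi.
have hB : all (fun e => e.1 != i) (cyc (L i.+1) i.+1 ++ C).
  by rewrite all_cat hC andbT; apply: all_cyc => [|j] /=; lia.
have hA' : all (fun e => e.1 <= i) (v0 :: A) by [].
rewrite -cat_cons; exists (size A).+1; split.
- by rewrite size_cat [size (_ ++ C)]size_cat size_cyc; lia.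
- by rewrite nth_cat ltnn subnn nth_cat size_cyc nth_cyc ifT //; lia.
- by move=> j hj; rewrite nth_cat hj; move/all_nthP: hA' => ->.
move=> j hj; rewrite nth_cat ltnNge hj /=.
have [hjB|] := ltnP (j - (size A).+1) (size (cyc (L i.+1) i.+1 ++ C)).
  by move/all_nthP: hB => ->.
by move=> hjB; rewrite nth_default //= eq_sym -lt0n; lia.
Qed.

Lemma lens_ltS N m : 1 <= m <= N -> lens N m < lens N.+1 m.
Proof.
move=> hm; have [rest e] := Ptail_cycle_head N (lens N) m hm.
by rewrite [lens N.+1 m]/= e /= size_cat size_cyc; lia.
Qed.

Lemma lens_ge2 N m : 1 <= m <= N -> 2 <= lens N m.
Proof.
elim: N m => [|N IH] m hm; first by lia.
have [hmN|hmN] := ltnP m N.+1.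
  have hm' : 1 <= m <= N by lia.
  by have := lens_ltS N m hm'; have := IH m hm'; lia.
have -> : m = N.+1 by lia.
case: N {IH hm hmN} (IH 1) => [|N] IH1 //.
rewrite -[lens _ _]/(size (Ptail N.+1 (lens N.+1) N.+2)) /Ptail ifN; last by rewrite ltnn andbF.
rewrite eqxx size_rep [size eloop]/= muln1 big_ltn //.
apply: leq_trans (IH1 isT) (leq_trans (leq_addr _ _) (leq_pmull _ _)).
by rewrite expn_gt0.
Qed.

Lemma lens_leD n d m : 1 <= m <= n -> lens n m + d <= lens (n + d) m.
Proof.
move=> hm; elim: d => [|d IH]; first by rewrite !addn0.
have hm' : 1 <= m <= n + d by lia.
by have := lens_ltS _ _ hm'; rewrite !addnS; lia.
Qed.

Lemma phi_cycle_pred N m r : 1 <= m <= N -> 0 < r < lens N m -> phi N (m, r.+1) = (m, r).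
Proof.
move=> hm hr; rewrite /phi ifN /=; last by apply: pair_neq_v0l; lia.
have [rest ->] := Ptail_cycle_head N (lens N) m hm.
case: r hr => [|r] hr //=; rewrite nth_cat size_cyc ifT; last by lia.
by rewrite nth_cyc ifT //; lia.
Qed.

Lemma phi_cycle_entry N m : 1 <= m <= N -> phi N (m, 1) = v0.
Proof.
move=> hm; rewrite /phi ifN /=; last by apply: pair_neq_v0l; lia.
by have [rest ->] := Ptail_cycle_head N (lens N) m hm.
Qed.

Lemma phi_depth_lt N w : phi N w != v0 -> (phi N w).2 < w.2.
Proof.
rewrite /phi; case: ifP => // _; case: w => a [|b] //= _.
by rewrite ltnS Ptail_depth.
Qed.

Lemma phi_cycle_ge N w : phi N w != v0 -> w.1 <= (phi N w).1.
Proof.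
rewrite /phi; case: ifP => // _; case: w => a [|b] //= h.
have [hb|hb] := ltnP b (size (Ptail N (lens N) a)); last by rewrite nth_default ?eqxx in h.
by move/all_nthP: (Ptail_cycle_ge N (lens N) a) => /(_ v0 b hb) /orP [/eqP e|]; rewrite ?e ?eqxx in h.
Qed.

Lemma edge_from_cycle N a b : edge N a b -> a != v0 ->
  exists m r, [/\ a = (m, r), 1 <= m <= N, 0 < r < lens N m &
    b = if r.+1 < lens N m then (m, r.+1) else v0].
Proof.
case=> [[-> _]|[m [t [hm [ht [ha hb]]]]]]; first by rewrite eqxx.
rewrite !nth_cycv in ha hb; move: ha; case: ifP => h ha; last by rewrite ha eqxx.
by move=> _; exists m, t.
Qed.

Lemma edge_from_v0 N b : edge N v0 b ->
  b = v0 \/ exists m, [/\ 1 <= m <= N, 1 < lens N m & b = (m, 1)].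
Proof.
case=> [[_ ->]|[m [t [hm [ht [ha hb]]]]]]; first by left.
rewrite !nth_cycv in ha hb; move: ha; case: ifP => h ha; first by case: ha; lia.
have t0 : t = 0 by lia.
by move: hb; rewrite t0 /=; case: ifP => h2 ->; [right; exists m | left].
Qed.

Lemma edge_into_cycle N a b : edge N a b -> b != v0 ->
  exists m r, [/\ b = (m, r.+1), 1 <= m <= N, r.+1 < lens N m &
    a = if 0 < r then (m, r) else v0].
Proof.
case=> [[_ ->]|[m [t [hm [ht [ha hb]]]]]]; first by rewrite eqxx.
rewrite !nth_cycv in ha hb; move: hb; case: ifP => h hb; last by rewrite hb eqxx.
move=> _; exists m, t; split => //; rewrite ha.
by case: t {ha hb ht} h => [|t] h //=; rewrite ifT //; lia.
Qed.

Definition cycles_ge (xs : nat -> nat -> V) (i : nat) :=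
  forall j N, xs j N != v0 -> i <= (xs j N).1.

Section Orbit.

Variable xs : nat -> nat -> V.
Hypothesis orbit_xs : is_orbit xs.

Lemma orbit_phi j N : phi N (xs j N.+1) = xs j N.
Proof. exact: (orbit_xs.1 j N).2. Qed.

Lemma orbit_edge j N : edge N (xs j N) (xs j.+1 N).
Proof. exact: orbit_xs.2. Qed.

Lemma orbit_in_cycle j N : xs j N != v0 ->
  1 <= (xs j N).1 <= N /\ 1 <= (xs j N).2 < lens N (xs j N).1.
Proof. by have [[->|//] _] := orbit_xs.1 j N; rewrite eqxx. Qed.

Lemma orbit_proj_v0 j N d : xs j (N + d) = v0 -> xs j N = v0.
Proof.
elim: d => [|d IH]; first by rewrite addn0.
by rewrite addnS => h; apply: IH; rewrite -orbit_phi h.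
Qed.

Lemma orbit_neq_v0D j N d : xs j N != v0 -> xs j (N + d) != v0.
Proof. by apply: contra => /eqP /orbit_proj_v0 ->. Qed.

Lemma orbit_depth_leD j N d : xs j N != v0 -> (xs j N).2 + d <= (xs j (N + d)).2.
Proof.
move=> h; elim: d => [|d IH]; first by rewrite !addn0.
have := phi_depth_lt (N + d) (xs j (N + d).+1).
by rewrite orbit_phi !addnS => /(_ (orbit_neq_v0D j N d h)); lia.
Qed.

Lemma orbit_cycle_geD j N d : xs j N != v0 -> (xs j (N + d)).1 <= (xs j N).1.
Proof.
move=> h; elim: d => [|d IH]; first by rewrite addn0.
have := phi_cycle_ge (N + d) (xs j (N + d).+1).
by rewrite orbit_phi !addnS => /(_ (orbit_neq_v0D j N d h)); lia.
Qed.

Lemma orbit_descend j n d m r : xs j (n + d) = (m, r + d) ->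
  1 <= m <= n -> 0 < r < lens n m -> xs j n = (m, r).
Proof.
elim: d r => [|d IH] r h hm hr; first by rewrite !addn0 in h.
apply: IH => //; rewrite -orbit_phi -addnS h addnS phi_cycle_pred //; first by lia.
by have := lens_leD n d m hm; lia.
Qed.

Lemma orbit_walk_fwd j N m r u : xs j N = (m, r) -> 0 < r -> r + u < lens N m ->
  xs (j + u) N = (m, r + u).
Proof.
elim: u => [|u IH] h hr hu; first by rewrite !addn0.
have e : xs (j + u) N = (m, r + u) by apply: IH => //; lia.
have := edge_from_cycle _ _ _ (orbit_edge (j + u) N).
rewrite e !addnS => /(_ (pair_neq_v0r m (r + u) (ltn_addr u hr))) [m' [r' [[<- <-] _ _ ->]]].
by rewrite ifT //; lia.
Qed.

Lemma orbit_walk_bwd j N u m r : xs (j + u) N = (m, r) -> u <= r -> 0 < r ->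
  xs j N = if u < r then (m, r - u) else v0.
Proof.
elim: u m r => [|u IH] m r h hu hr; first by rewrite addn0 in h; rewrite hr subn0.
have := edge_into_cycle _ _ _ (orbit_edge (j + u) N); rewrite -addnS h.
case/(_ (pair_neq_v0r m r hr)) => m' [r' [[<- er] _ _]].
case: (posnP r') => [r0|hr'] /= hprev.
  have u0 : u = 0 by lia.
  by rewrite er r0 u0; rewrite u0 addn0 in hprev.
by rewrite er (IH m r' hprev) ?ltnS ?subSS //; lia.
Qed.

Lemma orbit_deg_ge i : deg_is (xs 0) i -> cycles_ge xs i.
Proof.
move=> [_ deg_min] j N hj; have hjM := orbit_neq_v0D j N j hj.
have hdepth := orbit_depth_leD j N j hj; have [_ hr] := orbit_in_cycle j N hj.
have [hm _] := orbit_in_cycle j (N + j) hjM.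
apply: leq_trans _ (orbit_cycle_geD j N j hj); move: hm hdepth.
case e: (xs j (N + j)) => [m r] /= hm hjr.
have h0 : xs 0 (N + j) = (m, r - j).
  have := orbit_walk_bwd 0 (N + j) j m r; rewrite add0n ifT; last by lia.
  by apply=> //; lia.
by apply: (deg_min (N + j)); rewrite h0 /vdeg /= ifN // -lt0n; case/andP: hm.
Qed.

Lemma orbit_entry_descend n d T m : 1 <= m <= n ->
  xs T.+1 (n + d) = (m, 1) -> xs (T + d.+1) n = (m, 1).
Proof.
move=> hm h; have hL2 := lens_ge2 n m hm; have hLd := lens_leD n d m hm.
apply: (orbit_descend _ n d m 1) => //.
by rewrite -addSnnS; apply: orbit_walk_fwd => //; lia.
Qed.

(* The position on a cycle (second coordinate) grows by at most one per time step, and by at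
   least one per level up (orbit_depth_leD); this pins down the climb from time T to T+d+1. *)
Lemma orbit_entry_ascend n d T m : 1 <= m <= n ->
  xs T (n + d) = v0 -> xs (T + d.+1) n = (m, 1) -> xs T.+1 (n + d) = (m, 1).
Proof.
move=> hm h0 h1; have hne : xs (T + d.+1) n != v0 by rewrite h1 pair_neq_v0r.
have := orbit_depth_leD _ n d hne; have := orbit_cycle_geD _ n d hne.
have [hm' _] := orbit_in_cycle _ (n + d) (orbit_neq_v0D _ n d hne); move: hm'.
rewrite h1 /=; case e: (xs (T + d.+1) (n + d)) => [m' r] /= hm' hcyc hdepth.
have r_eq : r = d.+1.
  have := orbit_walk_bwd T (n + d) d.+1 m' r e; rewrite h0.
  case: ifP => [hlt|]; last by lia.
  by move=> /(_ (ltnW hlt) (ltn_trans (ltn0Sn d) hlt)) [_]; lia.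
have -> : m = m'.
  have hm'n : 1 <= m' <= n by lia.
  have hr1 : 0 < 1 < lens n m' by rewrite lens_ge2.
  by have := orbit_descend (T + d.+1) n d m' 1; rewrite e r_eq h1 add1n; case/(_ erefl hm'n hr1).
have := orbit_walk_bwd T.+1 (n + d) d m' r; rewrite addSnnS e ifT; last by lia.
by rewrite r_eq subSnn => ->.
Qed.

Lemma orbit_lift_entry i T N : cycles_ge xs i -> 1 <= i <= N -> xs T N = (i, 1) -> exists2 p, xs T N.+1 = (i, p) & 2 <= p.
Proof.
move=> deg_ge hi e; have ephi := orbit_phi T N; rewrite e in ephi.
have hne : xs T N.+1 != v0 by apply/eqP => h; move: ephi; rewrite h.
have hge := deg_ge T N.+1 hne; have [_ hr] := orbit_in_cycle T N.+1 hne.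
have := phi_cycle_ge N (xs T N.+1); rewrite ephi => /(_ (pair_neq_v0r i 1 isT)).
move: hne hge hr ephi; case: (xs T N.+1) => a b /= _ hge hr ephi hle.
have ea : a = i by lia.
exists b; first by rewrite ea.
case: b hr ephi => [|[|b]] // hr ephi.
by rewrite ea phi_cycle_entry in ephi.
Qed.

Lemma orbit_follow_Ptail T N m p t : xs T N.+1 = (m, p) -> 0 < p -> p + t < lens N.+1 m ->
  xs (T + t) N = nth v0 (v0 :: Ptail N (lens N) m) (p + t).
Proof.
move=> e hp hpt; have hne : xs T N.+1 != v0 by rewrite e pair_neq_v0r.
have [hm _] := orbit_in_cycle T N.+1 hne; rewrite e /= in hm.
rewrite -orbit_phi (orbit_walk_fwd T N.+1 m p t) //.
by rewrite /phi ifN // pair_neq_v0l //; lia.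
Qed.

End Orbit.

Section Transfer.

Variables xs ys : nat -> nat -> V.
Hypotheses (orbit_xs : is_orbit xs) (orbit_ys : is_orbit ys).

Lemma orbits_proj_eq j N d : xs j (N + d) = ys j (N + d) -> xs j N = ys j N.
Proof.
elim: d => [|d IH]; first by rewrite addn0.
by rewrite addnS => h; apply: IH; rewrite -(orbit_phi _ orbit_xs) -(orbit_phi _ orbit_ys) h.
Qed.

Lemma entry_transfer n d T m : 1 <= m <= n -> xs (T + d.+1) n = ys (T + d.+1) n ->
  ys T (n + d) = v0 -> xs T.+1 (n + d) = (m, 1) -> ys T.+1 (n + d) = (m, 1).
Proof.
move=> hm hxy hy0 hx1; apply: (orbit_entry_ascend _ orbit_ys) => //.
by rewrite -hxy; apply: (orbit_entry_descend _ orbit_xs).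
Qed.

End Transfer.

Section Agreement.

Variables xs ys : nat -> nat -> V.
Hypotheses (orbit_xs : is_orbit xs) (orbit_ys : is_orbit ys).
Variable n : nat.

(* The edge relation does not determine the successor of v0; agreement at level n does. *)
Lemma orbits_next_eq d T : xs (T + d.+1) n = ys (T + d.+1) n ->
  xs T (n + d) = ys T (n + d) ->
  (xs T.+1 (n + d)).1 <= n -> (ys T.+1 (n + d)).1 <= n ->
  xs T.+1 (n + d) = ys T.+1 (n + d).
Proof.
move=> hxy e hxn hyn.
have ex := orbit_edge _ orbit_xs T (n + d); have ey := orbit_edge _ orbit_ys T (n + d).
have [x0|xne] := eqVneq (xs T (n + d)) v0.
  rewrite x0 in ex; rewrite -e x0 in ey.
  case: (edge_from_v0 _ _ ex) => [x1|[m [hm _ x1]]].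
    case: (edge_from_v0 _ _ ey) => [y1|[m [hm _ y1]]]; first by rewrite x1 y1.
    rewrite y1 /= in hyn *; apply: (entry_transfer ys xs) => //; lia.
  rewrite x1 /= in hxn *; symmetry; apply: (entry_transfer xs ys) => //; first by lia.
  by rewrite -e.
have [m [r [xT _ _ ->]]] := edge_from_cycle _ _ _ ex xne.
rewrite e in xne; have [m' [r' [yT _ _ ->]]] := edge_from_cycle _ _ _ ey xne.
by move: e; rewrite xT yT => -[-> ->].
Qed.

Lemma entry_depth_le i s d p p' : 1 <= i < n ->
  (forall j, s <= j -> xs j n = ys j n) ->
  xs s.+1 (n + d) = (i, 1) -> ys s.+1 (n + d) = (i, 1) ->
  xs s.+1 (n + d).+1 = (i, p) -> ys s.+1 (n + d).+1 = (i, p') -> p' <= p.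
Proof.
move=> hi agree ex ey exp eyp; rewrite leqNgt; apply/negP => hpp.
have hiN : 1 <= i < n + d by lia.
have hi1N : 1 <= i.+1 <= n + d by lia.
have [q [hq hPq hlt hge]] :=
  Ptail_next_cycle_index (n + d) (lens (n + d)) i hiN (lens_ge2 _ _ hi1N).
set P := v0 :: Ptail _ _ i in hPq hlt hge.
have hq' : q < lens (n + d).+1 i := hq.
have hi0 : 0 < i by lia.
have hxne : xs s.+1 (n + d).+1 != v0 by rewrite exp pair_neq_v0l.
have hyne : ys s.+1 (n + d).+1 != v0 by rewrite eyp pair_neq_v0l.
have hp : 0 < p < lens (n + d).+1 i.
  by have [_ h] := orbit_in_cycle _ orbit_xs _ _ hxne; rewrite exp in h.
have hp' : 0 < p' < lens (n + d).+1 i.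
  by have [_ h] := orbit_in_cycle _ orbit_ys _ _ hyne; rewrite eyp in h.
have hxP t : p + t < lens (n + d).+1 i -> xs (s.+1 + t) (n + d) = nth v0 P (p + t).
  by move=> h; apply: (orbit_follow_Ptail _ orbit_xs) => //; lia.
have hyP t : p' + t < lens (n + d).+1 i -> ys (s.+1 + t) (n + d) = nth v0 P (p' + t).
  by move=> h; apply: (orbit_follow_Ptail _ orbit_ys) => //; lia.
have hPp : nth v0 P p = (i, 1) by rewrite -(addn0 p) -hxP ?addn0 //; lia.
have hPp' : nth v0 P p' = (i, 1) by rewrite -(addn0 p') -hyP ?addn0 //; lia.
have hpq' : p' < q by rewrite ltnNge; apply/negP => /hge; rewrite hPp' eqxx.
have shift t : t <= q - p' -> nth v0 P (p + t) = nth v0 P (p' + t).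
  elim: t => [_|t IH ht]; first by rewrite !addn0 hPp hPp'.
  rewrite -hxP -?hyP ?addnS; try lia.
  apply: orbits_next_eq; first by apply: agree; lia.
  - by rewrite hxP ?hyP ?IH //; lia.
  - by rewrite -addnS hxP; [have := hlt (p + t.+1); lia | lia].
  rewrite -addnS hyP; last by lia.
  have [hlt'|hge'] := ltnP (p' + t.+1) q; first by have := hlt _ hlt'; lia.
  have -> : p' + t.+1 = q by lia.
  by rewrite hPq /=; lia.
have := shift (q - p') (leqnn _); rewrite subnKC ?hPq; last by lia.
by move=> e; have := hlt (p + (q - p')); rewrite e /=; lia.
Qed.

End Agreement.

Section Backward.

Variables xs ys : nat -> nat -> V.
Hypotheses (orbit_xs : is_orbit xs) (orbit_ys : is_orbit ys).
Variables n i : nat.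
Hypothesis hin : 1 <= i < n.
Hypotheses (deg_xs : cycles_ge xs i) (deg_ys : cycles_ge ys i).

Lemma agree_backward s d : (forall j, s <= j -> xs j n = ys j n) ->
  xs s.+1 (n + d) = (i, 1) -> ys s.+1 (n + d) = (i, 1) -> forall j, xs j n = ys j n.
Proof.
elim/ltn_ind: s d => s IH d agree ex ey.
have hiN : 1 <= i <= n + d by lia.
have [p exp hp] := orbit_lift_entry _ orbit_xs i s.+1 (n + d) deg_xs hiN ex.
have [p' eyp hp'] := orbit_lift_entry _ orbit_ys i s.+1 (n + d) deg_ys hiN ey.
have epp : p' = p.
  apply/eqP; rewrite eqn_leq (entry_depth_le xs ys orbit_xs orbit_ys n i s d p p') //.
  by rewrite (entry_depth_le ys xs orbit_ys orbit_xs n i s d p' p) // => j /agree.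
subst p'.
have back j : j <= s.+1 -> s.+1 - j <= p -> xs j n = ys j n.
  move=> hj hjp; apply: (orbits_proj_eq _ _ orbit_xs orbit_ys j n d.+1); rewrite addnS.
  have hx := orbit_walk_bwd _ orbit_xs j (n + d).+1 (s.+1 - j) i p.
  have hy := orbit_walk_bwd _ orbit_ys j (n + d).+1 (s.+1 - j) i p.
  by rewrite subnKC // in hx hy; rewrite (hx exp hjp) ?(hy eyp hjp) //; lia.
have agree' j : s.+1 - p <= j -> xs j n = ys j n.
  by move=> hj; have [/agree //|hjs] := leqP s j; apply: back; lia.
have [hps|hps] := ltnP s.+1 p; first by move=> j; apply: agree'; lia.
have start zs : is_orbit zs -> zs s.+1 (n + d).+1 = (i, p) -> zs (s.+1 - p).+1 (n + d.+1) = (i, 1).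
  move=> hz ez; have := orbit_walk_bwd _ hz (s.+1 - p).+1 (n + d).+1 (p - 1) i p.
  have -> : (s.+1 - p).+1 + (p - 1) = s.+1 by lia.
  rewrite addnS ifT; last by lia.
  by move/(_ ez (leq_subr 1 p) (ltnW hp)); rewrite subKn // ltnW.
by apply: (IH (s.+1 - p) _ d.+1 agree'); [lia | apply: start | apply: start].
Qed.

End Backward.

Theorem lemma3p12 (xs ys : nat -> nat -> V) (i n k : nat) :
  is_orbit xs -> is_orbit ys ->
  0 < i -> deg_is (xs 0) i -> deg_is (ys 0) i ->
  i + 2 < n -> 1 <= k ->
  (forall j, k <= j -> xs j n = ys j n) ->
  (forall t, t <= lens n i -> xs (k + t) n = nth v0 (cycv n i) t) ->
  forall j, xs j n = ys j n.
Proof.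
move=> orbit_xs orbit_ys hi deg_x deg_y hn _ agree starts_cycle.
have hin : 1 <= i < n by lia.
have hL : 2 <= lens n i by apply: lens_ge2; lia.
have ex : xs k.+1 n = (i, 1).
  by rewrite -addn1 starts_cycle ?nth_cycv ?ifT //; lia.
have ey : ys k.+1 n = (i, 1) by rewrite -agree.
apply: (agree_backward xs ys orbit_xs orbit_ys n i hin
  (orbit_deg_ge _ orbit_xs i deg_x) (orbit_deg_ge _ orbit_ys i deg_y) k 0 agree).
  by rewrite addn0.
by rewrite addn0.
Qed.
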